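(* Let $E$ be a Banach space, $T\colon\ell^1\to E$ a continuous linear operator with $T(e_n)\neq0$ for all $n$, and $p>1$. If $T$ is $\frac1p$-power dominated, i.e. there exists $C>0$ with $$\Big\|\sum_{j\in F}x_j^{1/p}\,T(e_j)\Big\|_E^{p}\le C\sup_{N\subset F}\Big\|\sum_{j\in N}x_jT(e_j)\Big\|_E$$ for all finite $F\subset\mathbb N$ and $(x_j)_{j\in F}\subset[0,\infty)$, then $T$ is $\frac1p$-th power factorable with a continuous extension, i.e. $T$ admits a continuous linear extension $S\colon\ell^p\to E$.
   Context: $e_n=\chi_{\{n\}}$ denotes the $n$-th unit sequence; $\ell^1\subset\ell^p$ for $p>1$. *)

From HB Require Import structures.
From mathcomp Require Import all_boot all_order all_algebra.
From mathcomp Require Import all_classical all_reals all_analysis.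
Set Implicit Arguments. Unset Strict Implicit. Unset Printing Implicit Defensive.
Import Order.TTheory GRing.Theory Num.Theory.
Import numFieldNormedType.Exports.
Local Open Scope classical_set_scope.
Local Open Scope ring_scope.

Definition unit_seq (R : realType) (n : nat) : nat -> R :=
  fun k => (k == n)%:R.

Definition in_lp (R : realType) (p : R) (x : nat -> R) : Prop :=
  (\sum_(k <oo) ((`|x k| `^ p)%:E) < +oo)%E.

Definition lp_norm (R : realType) (p : R) (x : nat -> R) : R :=
  (fine (\sum_(k <oo) ((`|x k| `^ p)%:E))) `^ p^-1.

Definition linear_on_lp (R : realType) (E : normedModType R) (p : R)
  (T : (nat -> R) -> E) : Prop :=
  forall (a : R) (x y : nat -> R), in_lp p x -> in_lp p y ->
    T (fun n => a * x n + y n) = a *: T x + T y.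

Definition continuous_on_lp (R : realType) (E : normedModType R) (p : R)
  (T : (nat -> R) -> E) : Prop :=
  forall x, in_lp p x -> forall eps : R, 0 < eps ->
    exists2 delta : R, 0 < delta &
      forall y, in_lp p y -> lp_norm p (fun n => y n - x n) < delta ->
        `|T y - T x| < eps.

Definition power_dominated (R : realType) (E : normedModType R) (p : R)
  (T : (nat -> R) -> E) : Prop :=
  exists2 C : R, 0 < C &
    forall (F : set nat) (x : nat -> R), finite_set F ->
      (forall j, F j -> 0 <= x j) ->
      `| \sum_(j \in F) (x j `^ p^-1) *: T (unit_seq R j) | `^ p
      <= C * sup [set `| \sum_(j \in N) x j *: T (unit_seq R j) |
                  | N in [set N : set nat | N `<=` F]].

From HB Require Import structures.
From mathcomp Require Import all_boot all_order all_algebra.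
From mathcomp Require Import all_classical all_reals all_analysis.
From mathcomp Require Import lra.
Import Order.TTheory GRing.Theory Num.Theory.
Import numFieldNormedType.Exports.
Local Open Scope classical_set_scope.
Local Open Scope ring_scope.

(* Continuity of T on l^1 bounds the vectors u_j := T e_j by some M, so for
   x >= 0 every subsum of sum_(j in F) x_j u_j has norm at most M sum x_j.
   The domination hypothesis then gives
   |sum_(j in F) y_j u_j| <= (C M)^(1/p) |y|_p for y >= 0, hence with the
   constant 2 (C M)^(1/p) for all y.  Thus the partial sums of sum_j x_j u_j
   are Cauchy for x in l^p and their limit S x is a bounded linear operator
   on l^p; it agrees with T on l^1 because truncations of x converge to x
   in l^1. *)

Lemma ler_powR2r {R : realType} {r a b : R} :
  0 <= r -> 0 <= a -> a <= b -> a `^ r <= b `^ r.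
Proof.
move=> r0 a0 ab; apply: (ge0_ler_powR r0) => //; rewrite nnegrE //.
exact: le_trans ab.
Qed.

Lemma ltr_powR2r {R : realType} {r a b : R} :
  0 < r -> 0 <= a -> a < b -> a `^ r < b `^ r.
Proof.
move=> r0 a0 ab; apply: (gt0_ltr_powR r0) => //; rewrite nnegrE //.
exact: le_trans (ltW ab).
Qed.

Lemma powRKV {R : realType} {p a : R} :
  p != 0 -> 0 <= a -> (a `^ p) `^ p^-1 = a.
Proof. by move=> p0 a0; rewrite -powRrM mulfV // powRr1. Qed.

Section lp_sequences.
Context {R : realType} {p : R}.
Implicit Types x y : nat -> R.

Lemma lp_term_ge0 (a : R) : (0 <= (`|a| `^ p)%:E)%E.
Proof. by rewrite lee_fin powR_ge0. Qed.

Lemma nneseries_finsupp (f : nat -> \bar R) n :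
  (forall k, 0 <= f k)%E -> (forall k, (n <= k)%N -> f k = 0) ->
  (\sum_(k <oo) f k = \sum_(0 <= k < n) f k)%E.
Proof.
move=> f0 fn; rewrite (nneseries_split 0 n) // add0n eseries0 ?adde0 //.
by move=> i ni _; exact: fn.
Qed.

Lemma in_lp_finsupp n x : 0 < p -> (forall k, (n <= k)%N -> x k = 0) ->
  in_lp p x.
Proof.
move=> p0 xn; rewrite /in_lp (@nneseries_finsupp _ n).
- by rewrite sumEFin ltry.
- by move=> k; exact: lp_term_ge0.
- by move=> k /xn ->; rewrite normr0 powR0 // gt_eqF.
Qed.

Lemma lp_sum_fin_num x : in_lp p x ->
  (\sum_(k <oo) ((`|x k| `^ p)%:E))%E \is a fin_num.
Proof.
move=> xp; rewrite ge0_fin_numE //.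
by apply: nneseries_ge0 => k _ _; exact: lp_term_ge0.
Qed.

Lemma lp_partial_sum_le x n : in_lp p x ->
  \sum_(0 <= k < n) `|x k| `^ p <= fine (\sum_(k <oo) ((`|x k| `^ p)%:E))%E.
Proof.
move=> xp; rewrite -lee_fin fineK ?lp_sum_fin_num // -sumEFin.
by apply: nneseries_lim_ge => k _ _; exact: lp_term_ge0.
Qed.

Lemma lp_tail_small {x} {eta : R} : in_lp p x -> 0 < eta ->
  \forall N \near \oo, fine (\sum_(N <= k <oo) ((`|x k| `^ p)%:E))%E < eta.
Proof.
move=> xp eta0.
have /fine_cvgP[fin /cvgr0Pnorm_lt/(_ eta eta0)] :=
  nneseries_tail_cvg xp (fun k _ => lp_term_ge0 (x k)).
by apply: filterS => N /= h; apply: le_lt_trans (ler_norm _) h.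
Qed.

Lemma lp_block_small {x} {eta : R} : in_lp p x -> 0 < eta ->
  \forall N \near \oo, forall N', \sum_(N <= k < N') `|x k| `^ p < eta.
Proof.
move=> xp eta0.
have /fine_cvgP[fin /cvgr0Pnorm_lt/(_ eta eta0)] :=
  nneseries_tail_cvg xp (fun k _ => lp_term_ge0 (x k)).
apply: filter_app; apply: filterS fin => N finN /= lt N'.
apply: le_lt_trans (le_lt_trans (ler_norm _) lt).
rewrite -lee_fin fineK // -sumEFin.
by apply: nneseries_lim_ge => k _ _; exact: lp_term_ge0.
Qed.

Lemma powR_normB_le (a b : R) : 0 < p ->
  `|b - a| `^ p <= 2 `^ p * (`|a| `^ p + `|b| `^ p).
Proof.
move=> p0; wlog h : a b / `|a| <= `|b|.
  move=> H; case: (leP `|a| `|b|) => [|/ltW] h; first exact: H.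
  by rewrite distrC (addrC (`|a| `^ p)); exact: H.
have h2 : `|b - a| <= 2 * `|b| by have := ler_normB b a; lra.
apply: (le_trans (ler_powR2r (ltW p0) (normr_ge0 _) h2)).
rewrite powRM ?normr_ge0 //; apply: ler_wpM2l; first exact: powR_ge0.
by have := powR_ge0 `|a| p; lra.
Qed.

Lemma in_lpB {x y} : 0 < p -> in_lp p x -> in_lp p y ->
  in_lp p (fun n => y n - x n).
Proof.
move=> p0 xp yp; rewrite /in_lp.
apply: (@le_lt_trans _ _ (\sum_(k <oo)
    ((2 `^ p)%:E * ((`|x k| `^ p)%:E + (`|y k| `^ p)%:E)))%E).
  apply: lee_nneseries => [k _ _|k _]; first exact: lp_term_ge0.
  by rewrite -EFinD -EFinM lee_fin powR_normB_le.
rewrite nneseriesZl; last by move=> k _; rewrite adde_ge0 ?lp_term_ge0.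
rewrite nneseriesD; [|by move=> k _ _; exact: lp_term_ge0..].
rewrite -ge0_fin_numE ?fin_numM ?fin_numD ?lp_sum_fin_num //.
by rewrite mule_ge0 ?adde_ge0 ?lee_fin ?powR_ge0 //;
  apply: nneseries_ge0 => k _ _; exact: lp_term_ge0.
Qed.

End lp_sequences.

Definition seq_trunc {R : realType} (N : nat) (x : nat -> R) : nat -> R :=
  fun k => if (k < N)%N then x k else 0.

Section lp_finite_support.
Context {R : realType} {p : R}.
Hypothesis p0 : 0 < p.

Lemma in_lp0 : in_lp p (fun _ => 0 : R).
Proof. by apply: (in_lp_finsupp 0). Qed.

Lemma in_lp_unit_seqZ (c : R) j : in_lp p (fun n => c * unit_seq R j n).
Proof.
apply: (in_lp_finsupp j.+1) => // k jk.
by rewrite /unit_seq gtn_eqF // mulr0.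
Qed.

Lemma in_lp_unit_seq j : in_lp p (unit_seq R j).
Proof.
by apply: (in_lp_finsupp j.+1) => // k jk; rewrite /unit_seq gtn_eqF.
Qed.

Lemma in_lp_seq_trunc N (x : nat -> R) : in_lp p (seq_trunc N x).
Proof.
by apply: (in_lp_finsupp N) => // k; rewrite /seq_trunc leqNgt => /negbTE ->.
Qed.

Lemma lp_norm_unit_seqZ (c : R) j : 0 <= c ->
  lp_norm p (fun n => c * unit_seq R j n) = c.
Proof.
move=> c0; rewrite /lp_norm (@nneseries_finsupp _ _ j.+1); last 2 first.
- by move=> k; exact: lp_term_ge0.
- by move=> k jk; rewrite /unit_seq gtn_eqF // mulr0 normr0 powR0 ?lt0r_neq0.
rewrite big_nat_recr //= big1_seq ?add0e /=; last first.
  move=> k /=; rewrite mem_index_iota => /andP[_ kj].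
  by rewrite /unit_seq ltn_eqF // mulr0 normr0 powR0 ?lt0r_neq0.
by rewrite /unit_seq eqxx mulr1 ger0_norm // powRKV ?lt0r_neq0.
Qed.

Lemma lp_norm_seq_trunc_sub N (x : nat -> R) :
  lp_norm p (fun n => seq_trunc N x n - x n) =
  fine (\sum_(N <= k <oo) ((`|x k| `^ p)%:E))%E `^ p^-1.
Proof.
rewrite /lp_norm (nneseries_split 0 N); last by move=> k _; exact: lp_term_ge0.
rewrite add0n big1_seq ?add0e; last first.
  move=> k /=; rewrite mem_index_iota => /andP[_ kN].
  by rewrite /seq_trunc kN subrr normr0 powR0 ?lt0r_neq0.
congr (fine _ `^ _); rewrite eseries_cond [RHS]eseries_cond.
apply: eq_eseriesr => k /andP[_ Nk].
by rewrite /seq_trunc ltnNge Nk /= sub0r normrN.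
Qed.

End lp_finite_support.

Section power_dominated_family.
Context {R : realType} {E : normedModType R} {p C M : R} {u : nat -> E}.
Hypotheses (p0 : 0 < p) (C0 : 0 < C) (uM : forall j, `|u j| <= M).
Hypothesis dom : forall (F : set nat) (x : nat -> R), finite_set F ->
  (forall j, F j -> 0 <= x j) ->
  `| \sum_(j \in F) (x j `^ p^-1) *: u j | `^ p
  <= C * sup [set `| \sum_(j \in N) x j *: u j |
              | N in [set N : set nat | N `<=` F]].

Lemma sup_subsum_norm_le (x : nat -> R) m n : (forall j, 0 <= x j) ->
  sup [set `| \sum_(j \in N) x j *: u j |
       | N in [set N : set nat | N `<=` [set` index_iota m n]]]
  <= M * \sum_(m <= j < n) x j.
Proof.
move=> x0; apply: ge_sup; first by exists `|\sum_(j \in set0) x j *: u j|, set0.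
move=> _ [N NF <-].
rewrite -(setIidl NF) fsbig_mkcondl -fsbig_seq ?iota_uniq //.
apply: (le_trans (ler_norm_sum _ _ _)); rewrite mulr_sumr.
apply: ler_sum => j _; case: ifP => _.
  by rewrite normrZ ger0_norm // mulrC ler_wpM2r.
by rewrite normr0 mulr_ge0 // (le_trans (normr_ge0 _) (uM j)).
Qed.

Lemma dominated_nonneg_block_le (y : nat -> R) m n : (forall j, 0 <= y j) ->
  `|\sum_(m <= j < n) y j *: u j| <=
  (C * M) `^ p^-1 * (\sum_(m <= j < n) y j `^ p) `^ p^-1.
Proof.
move=> y0; pose x j := y j `^ p.
have x0 j : 0 <= x j by exact: powR_ge0.
have := @dom _ x (finite_seq (index_iota m n)) (fun j _ => x0 j).
have -> : \sum_(j \in [set` index_iota m n]) (x j `^ p^-1) *: u j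
    = \sum_(m <= j < n) y j *: u j.
  rewrite -fsbig_seq ?iota_uniq //; apply: eq_bigr => j _.
  by rewrite /x powRKV ?lt0r_neq0.
move=> /le_trans/(_ (ler_wpM2l (ltW C0) (sup_subsum_norm_le x m n x0))).
rewrite mulrA => le_pow.
rewrite -(powRKV (lt0r_neq0 p0) (normr_ge0 (\sum_(m <= j < n) y j *: u j))).
have M0 : 0 <= M := le_trans (normr_ge0 _) (uM 0).
rewrite -powRM; last 2 first.
- by rewrite mulr_ge0 ?(ltW C0).
- by apply: sumr_ge0 => j _; exact: x0.
by apply: ler_powR2r; rewrite ?invr_ge0 ?powR_ge0 ?(ltW p0).
Qed.

(* The factor 2 comes from splitting [y] into positive and negative parts. *)
Lemma dominated_block_le (y : nat -> R) m n :
  `|\sum_(m <= j < n) y j *: u j| <=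
  2 * (C * M) `^ p^-1 * (\sum_(m <= j < n) `|y j| `^ p) `^ p^-1.
Proof.
pose yp j := (`|y j| + y j) / 2; pose ym j := (`|y j| - y j) / 2.
have hy j : y j <= `|y j| /\ - y j <= `|y j|.
  by split; [exact: ler_norm | rewrite -normrN; exact: ler_norm].
have ypm j : 0 <= yp j <= `|y j| /\ 0 <= ym j <= `|y j|.
  by case: (hy j) => ? ?; rewrite /yp /ym; split; apply/andP; split; lra.
have -> : \sum_(m <= j < n) y j *: u j =
    \sum_(m <= j < n) yp j *: u j - \sum_(m <= j < n) ym j *: u j.
  rewrite -sumrB; apply: eq_bigr => j _; rewrite -scalerBl /yp /ym.
  by congr (_ *: _); lra.
have le_abs (z : nat -> R) : (forall j, 0 <= z j <= `|y j|) ->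
    `|\sum_(m <= j < n) z j *: u j| <=
    (C * M) `^ p^-1 * (\sum_(m <= j < n) `|y j| `^ p) `^ p^-1.
  move=> hz; have z0 j : 0 <= z j by case/andP: (hz j).
  apply: le_trans (dominated_nonneg_block_le z m n z0) _.
  apply: ler_wpM2l; first exact: powR_ge0.
  apply: ler_powR2r; first by rewrite invr_ge0 ltW.
    by apply: sumr_ge0 => j _; exact: powR_ge0.
  apply: ler_sum => j _; apply: ler_powR2r (ltW p0) (z0 j) _.
  by case/andP: (hz j).
apply: le_trans (ler_normB _ _) _; rewrite -!mulrA mulr2n mulrDl mul1r.
by apply: lerD; apply: le_abs => j; case: (ypm j).
Qed.

End power_dominated_family.

Definition lp_series {R : realType} {E : completeNormedModType R}
  (u : nat -> E) (x : nat -> R) : E :=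
  lim (series (fun j => x j *: u j) @ \oo).

Section lp_series_operator.
Context {R : realType} {E : completeNormedModType R} {p K : R} {u : nat -> E}.
Hypotheses (p0 : 0 < p) (K0 : 0 < K).
Hypothesis uK : forall (y : nat -> R) m n,
  `|\sum_(m <= j < n) y j *: u j| <=
  K * (\sum_(m <= j < n) `|y j| `^ p) `^ p^-1.

Lemma lp_series_cvg x : in_lp p x -> cvgn (series (fun j => x j *: u j)).
Proof.
move=> xp; apply/cauchy_cvgP/cauchy_seriesP => eps eps0.
have eta0 : 0 < (eps / K) `^ p by rewrite powR_gt0 ?divr_gt0.
have [N _ HN] := lp_block_small xp eta0.
exists ([set n | (N <= n)%N], [set n | (N <= n)%N]); first by split; exists N.
move=> [a b] [/= Na _]; apply: le_lt_trans (uK _ _ _) _.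
rewrite -ltr_pdivlMl // mulrC.
rewrite -(powRKV (lt0r_neq0 p0) (ltW (divr_gt0 eps0 K0))).
apply: ltr_powR2r; rewrite ?invr_gt0 //; last exact: HN.
by apply: sumr_ge0 => j _; exact: powR_ge0.
Qed.

Lemma lp_series_linear : linear_on_lp p (lp_series u).
Proof.
move=> a x y xp yp; rewrite /lp_series.
have -> : series (fun j => (a * x j + y j) *: u j) =
    fun n => a *: series (fun j => x j *: u j) n
             + series (fun j => y j *: u j) n.
  apply/funext => n; rewrite !seriesEnat /= scaler_sumr -big_split /=.
  by apply: eq_bigr => j _; rewrite scalerDl scalerA.
apply: cvg_lim => //; apply: cvgD; last exact: lp_series_cvg.
by apply: cvgZ; [exact: cvg_cst | exact: lp_series_cvg].
Qed.

Lemma lp_series_lipschitz x y : in_lp p x -> in_lp p y ->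
  `|lp_series u y - lp_series u x| <= K * lp_norm p (fun n => y n - x n).
Proof.
move=> xp yp.
have sB : series (fun j => (y j - x j) *: u j) @ \oo -->
    lp_series u y - lp_series u x.
  have -> : series (fun j => (y j - x j) *: u j) =
      fun n => series (fun j => y j *: u j) n - series (fun j => x j *: u j) n.
    apply/funext => n; rewrite !seriesEnat /= -sumrB.
    by apply: eq_bigr => j _; rewrite scalerBl.
  by apply: cvgB; exact: lp_series_cvg.
rewrite -(cvg_lim _ (cvg_norm sB)) //.
apply: limr_le; first by apply/cvg_ex; eexists; exact: cvg_norm sB.
near=> n; rewrite seriesEnat /=; apply: le_trans (uK _ _ _) _.
apply: ler_wpM2l; first exact: ltW.
apply: ler_powR2r; first by rewrite invr_ge0 ltW.
  by apply: sumr_ge0 => j _; exact: powR_ge0.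
exact: lp_partial_sum_le (in_lpB p0 xp yp).
Unshelve. all: by end_near.
Qed.

Lemma lp_series_continuous : continuous_on_lp p (lp_series u).
Proof.
move=> x xp eps eps0; exists (eps / K); first by rewrite divr_gt0.
move=> y yp hxy; apply: le_lt_trans (lp_series_lipschitz x y xp yp) _.
by rewrite -ltr_pdivlMl // mulrC.
Qed.

End lp_series_operator.

Section linear_continuous_on_lp.
Context {R : realType} {E : normedModType R} {p : R} {T : (nat -> R) -> E}.
Hypotheses (p0 : 0 < p) (linT : linear_on_lp p T).

Lemma linear_on_lp0 : T (fun _ => 0) = 0.
Proof.
have := linT 1 _ _ (in_lp0 p0) (in_lp0 p0).
rewrite (_ : (fun n => 1 * 0 + 0) = fun _ => 0); last first.
  by apply/funext => n; rewrite mulr0 addr0.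
by rewrite scale1r => /eqP; rewrite -subr_eq subrr eq_sym => /eqP.
Qed.

Lemma linear_unit_seqZ (c : R) j :
  T (fun n => c * unit_seq R j n) = c *: T (unit_seq R j).
Proof.
have := linT c _ _ (in_lp_unit_seq p0 j) (in_lp0 p0).
by rewrite linear_on_lp0 addr0 => <-; congr T; apply/funext => n; rewrite addr0.
Qed.

Lemma linear_seq_trunc N x :
  T (seq_trunc N x) = series (fun j => x j *: T (unit_seq R j)) N.
Proof.
elim: N => [|N IH]; first by rewrite seriesEnat /= big_geq // -linear_on_lp0.
have -> : seq_trunc N.+1 x = fun k => x N * unit_seq R N k + seq_trunc N x k.
  apply/funext => k; rewrite /seq_trunc /unit_seq ltnS.
  by case: (ltngtP k N) => [||->] /=; rewrite ?mulr0 ?mulr1 ?add0r ?addr0.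
rewrite (linT _ _ _ (in_lp_unit_seq p0 N) (in_lp_seq_trunc p0 N x)) IH.
by rewrite !seriesEnat /= big_nat_recr //= addrC.
Qed.

Hypothesis contT : continuous_on_lp p T.

Lemma continuous_unit_seq_bounded :
  exists2 M : R, 0 < M & forall j, `|T (unit_seq R j)| <= M.
Proof.
have [d d0 Hd] := contT _ (in_lp0 p0) _ ltr01.
exists (2 / d); first by rewrite divr_gt0.
move=> j; have hd2 : 0 < d / 2 by rewrite divr_gt0.
have := Hd _ (in_lp_unit_seqZ p0 (d / 2) j).
rewrite (_ : (fun n => _ - 0) = fun n => d / 2 * unit_seq R j n); last first.
  by apply/funext => n; rewrite subr0.
rewrite (lp_norm_unit_seqZ p0); last exact: ltW.
rewrite linear_unit_seqZ linear_on_lp0 subr0 normrZ gtr0_norm //.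
have half_lt : d / 2 < d by rewrite ltr_pdivrMr // ltr_pMr // ltr1n.
by move=> /(_ half_lt); rewrite -ltr_pdivlMl // mulr1 invf_div => /ltW.
Qed.

Lemma series_unit_seq_cvg x : in_lp p x ->
  series (fun j => x j *: T (unit_seq R j)) @ \oo --> T x.
Proof.
move=> xp; apply/cvgrPdist_lt => eps eps0.
have [d d0 Hd] := contT _ xp _ eps0.
have dp0 : 0 < d `^ p by exact: powR_gt0.
apply: filterS (lp_tail_small xp dp0) => N tail_lt.
rewrite -linear_seq_trunc distrC; apply: Hd; first exact: in_lp_seq_trunc.
rewrite lp_norm_seq_trunc_sub // -(powRKV (lt0r_neq0 p0) (ltW d0)).
apply: ltr_powR2r tail_lt; first by rewrite invr_gt0.
by apply: fine_ge0; apply: nneseries_ge0 => k _ _; exact: lp_term_ge0.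
Qed.

End linear_continuous_on_lp.

Theorem lemma7p5 (R : realType) (E : completeNormedModType R)
  (T : (nat -> R) -> E) (p : R) :
  linear_on_lp 1 T -> continuous_on_lp 1 T ->
  (forall n : nat, T (unit_seq R n) != 0) ->
  1 < p ->
  power_dominated p T ->
  exists S : (nat -> R) -> E,
    [/\ linear_on_lp p S, continuous_on_lp p S &
        forall x, in_lp 1 x -> S x = T x].
Proof.
move=> linT contT _ p1 [C C0 dom].
have p0 : 0 < p := lt_trans ltr01 p1.
have [M M0 TeM] := continuous_unit_seq_bounded ltr01 linT contT.
have K0 : 0 < 2 * (C * M) `^ p^-1 by rewrite mulr_gt0 // powR_gt0 // mulr_gt0.
have TeK := dominated_block_le p0 C0 TeM dom.
exists (lp_series (fun j => T (unit_seq R j))); split.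
- exact: lp_series_linear p0 K0 TeK.
- exact: lp_series_continuous p0 K0 TeK.
- move=> x x1; apply: cvg_lim => //.
  exact: series_unit_seq_cvg ltr01 linT contT x x1.
Qed.
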